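(* Let $\epsilon\in(0,1)$, $K\ge3$, $C>K$, $\delta\in(0,1)$, and let $g:[0,1]\to[1,K]$ be non-decreasing. Let $f(\lambda)=\frac{C}{\lambda^2}+\frac{g(\lambda)}{\epsilon^2}$ and let $\lambda^*\in(0,1]$ be a minimizer of $f$. Suppose that evaluating $g$ at $\lambda$ costs $O(C\ln(K/\delta)/\lambda^2)$ samples. Then SolveOpt returns $\hat\lambda$ with $f(\hat\lambda)\le50f(\lambda^* )$ while using at most $O(f(\lambda^* )\ln(K/\delta)\ln(1/\epsilon))$ samples.
   Context: SolveOpt$(\epsilon,K,C,g)$: evaluate $g(1)$; set $U=1$, $L=\sqrt{\frac{C}{C+(g(1)-1)/\epsilon^2}}$, $\lambda=1$; while $\lambda\ge L$: evaluate $g(\lambda)$; if $f(\lambda)<f(U)$, set $U\leftarrow\lambda$ and $L\leftarrow\sqrt{\frac{C}{C/\lambda^2+(g(\lambda)-1)/\epsilon^2}}$; then set $\lambda\leftarrow\lambda/5$. Return $\hat\lambda=U$. *)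

From Stdlib Require Import Reals.
Open Scope R_scope.

Definition fobj (eps C : R) (g : R -> R) (l : R) : R :=
  C / l ^ 2 + g l / eps ^ 2.

Definition sU (s : R * R * R) : R := fst (fst s).
Definition sL (s : R * R * R) : R := snd (fst s).
Definition slam (s : R * R * R) : R := snd s.

Definition solveopt_init (eps C : R) (g : R -> R) : R * R * R :=
  ((1, sqrt (C / (C + (g 1 - 1) / eps ^ 2))), 1).

Definition solveopt_step (eps C : R) (g : R -> R) (s : R * R * R) : R * R * R :=
  let U := sU s in let L := sL s in let lam := slam s in
  if Rlt_dec (fobj eps C g lam) (fobj eps C g U)
  then ((lam, sqrt (C / (C / lam ^ 2 + (g lam - 1) / eps ^ 2))), lam / 5)
  else ((U, L), lam / 5).

Definition solveopt_state (eps C : R) (g : R -> R) (k : nat) : R * R * R :=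
  Nat.iter k (solveopt_step eps C g) (solveopt_init eps C g).

(* The while loop runs exactly N times: the guard lambda >= L holds at the
   states 0..N-1 and fails at state N.  The output is then sU (state N). *)
Definition solveopt_halts_at (eps C : R) (g : R -> R) (N : nat) : Prop :=
  (forall k : nat, (k < N)%nat ->
     slam (solveopt_state eps C g k) >= sL (solveopt_state eps C g k)) /\
  slam (solveopt_state eps C g N) < sL (solveopt_state eps C g N).

Fixpoint sum_upto (h : nat -> R) (n : nat) : R :=
  match n with
  | O => 0
  | S m => sum_upto h m + h m
  end.

(* Total number of samples used when the loop runs N times: one evaluation
   of g(1) at initialisation plus one evaluation of g(lambda_k) in each
   iteration k < N; cost l is the sample cost of evaluating g at l. *)
Definition solveopt_samples (eps C : R) (g : R -> R) (cost : R -> R) (N : nat) : R :=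
  cost 1 + sum_upto (fun k => cost (slam (solveopt_state eps C g k))) N.

(** The step sizes are λ_k = 5^-k, and the loop keeps L = sqrt (C / (f U - 1/ε²)),
    so the guard λ ≥ L reads C/λ² ≤ f U - 1/ε².  Fix any λ⋆ in (0,1].  While λ_k is still at least λ⋆/5, any λ_j that lands in
    [λ⋆/5, λ⋆] has f(λ_j) ≤ 25 f(λ⋆) by monotonicity of g, and U only improves;
    so at every step either f U ≤ 25 f(λ⋆) or C/λ_k² ≤ 25 C/λ⋆².  Either
    alternative bounds f U at exit and C/λ_k² during the loop by 25 f(λ⋆), and the
    sample costs C/λ_k² = C 25^k form a geometric series dominated by its last term. *)

From Stdlib Require Import Reals Lra Lia Wf_nat.
Open Scope R_scope.

Lemma lt_div_iff a b c : 0 < b -> a < c / b <-> a * b < c.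
Proof.
  intros Hb. unfold Rdiv. split; intro H.
  - apply (Rmult_lt_compat_r b) in H; [|lra].
    rewrite Rmult_assoc, Rinv_l in H by lra. lra.
  - apply (Rmult_lt_reg_r b); [lra|].
    rewrite Rmult_assoc, Rinv_l by lra. lra.
Qed.

Lemma lt_sqrt_iff l x : 0 <= l -> 0 <= x -> l < sqrt x <-> l ^ 2 < x.
Proof.
  intros Hl Hx. pose proof (pow2_sqrt x Hx) as Hsq. pose proof (sqrt_pos x) as Hpos.
  split; intro H; [nra|]. destruct (Rlt_le_dec l (sqrt x)); [assumption | nra].
Qed.

Lemma lt_sqrt_div_iff l C D :
  0 < l -> 0 < C -> 0 < D -> l < sqrt (C / D) <-> D < C / l ^ 2.
Proof.
  intros Hl HC HD. assert (Hl2 : 0 < l ^ 2) by (apply pow_lt; lra).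
  assert (HCD : 0 < C / D) by (apply Rdiv_lt_0_compat; lra).
  rewrite lt_sqrt_iff, !lt_div_iff by lra.
  rewrite Rmult_comm. reflexivity.
Qed.

Lemma div_sq_le_25 C l m : 0 <= C -> 0 < l -> 0 < m -> m <= 5 * l -> C / l ^ 2 <= 25 * (C / m ^ 2).
Proof.
  intros HC Hl Hm Hml. replace (25 * (C / m ^ 2)) with (C / (m ^ 2 / 25)) by (field; lra).
  unfold Rdiv at 1 2. apply Rmult_le_compat_l; [lra|].
  apply Rinv_le_contravar; nra.
Qed.

Lemma le_div_sq C u : 0 <= C -> 0 < u <= 1 -> C <= C / u ^ 2.
Proof.
  intros HC Hu. replace C with (C / 1 ^ 2) at 1 by field.
  unfold Rdiv. apply Rmult_le_compat_l; [lra|].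
  apply Rinv_le_contravar; [apply pow_lt|]; nra.
Qed.

Lemma inv_pow5_in_unit k : 0 < / 5 ^ k <= 1.
Proof.
  split; [apply Rinv_0_lt_compat, pow_lt; lra|].
  rewrite <- Rinv_1. apply Rinv_le_contravar; [lra|]. apply pow_R1_Rle; lra.
Qed.

Lemma sum_upto_le (h h' : nat -> R) n :
  (forall k, (k < n)%nat -> h k <= h' k) -> sum_upto h n <= sum_upto h' n.
Proof.
  induction n as [|n IH]; simpl; intros H; [lra|].
  assert (h n <= h' n) by (apply H; lia).
  assert (sum_upto h n <= sum_upto h' n) by (apply IH; intros; apply H; lia). lra.
Qed.

Lemma sum_upto_scal a (h : nat -> R) n : sum_upto (fun k => a * h k) n = a * sum_upto h n.
Proof. induction n as [|n IH]; simpl; [ring | rewrite IH; ring]. Qed.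

Lemma sum_upto_geom q n : sum_upto (fun k => q ^ k) n * (q - 1) = q ^ n - 1.
Proof. induction n as [|n IH]; simpl; [ring | rewrite Rmult_plus_distr_r, IH; ring]. Qed.

Section SolveOpt.

Variables (eps C : R) (g : R -> R).

Local Notation f := (fobj eps C g).
Local Notation st := (solveopt_state eps C g).

Lemma solveopt_state_S k : st (S k) = solveopt_step eps C g (st k).
Proof. reflexivity. Qed.

Lemma slam_state k : slam (st k) = / 5 ^ k.
Proof.
  induction k as [|k IH]; [unfold slam; simpl; lra|].
  rewrite solveopt_state_S. unfold solveopt_step.
  destruct Rlt_dec; unfold slam at 1; simpl; fold (slam (st k)); rewrite IH;
    field; apply pow_nonzero; lra.
Qed.

Lemma sU_state_pow k : exists j, sU (st k) = / 5 ^ j.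
Proof.
  induction k as [|k [j IH]]; [exists O; unfold sU; simpl; lra|].
  rewrite solveopt_state_S. unfold solveopt_step.
  destruct Rlt_dec; unfold sU at 1; simpl.
  - exists k. apply slam_state.
  - exists j. exact IH.
Qed.

Lemma sU_state_in_unit k : 0 < sU (st k) <= 1.
Proof. destruct (sU_state_pow k) as [j ->]. apply inv_pow5_in_unit. Qed.

Lemma fobj_sU_S k : f (sU (st (S k))) = Rmin (f (sU (st k))) (f (slam (st k))).
Proof.
  rewrite solveopt_state_S. unfold solveopt_step, Rmin.
  destruct Rlt_dec, Rle_dec; unfold sU at 1; simpl; fold (sU (st k)); lra.
Qed.

Lemma fobj_sU_antitone j k : (j <= k)%nat -> f (sU (st k)) <= f (sU (st j)).
Proof.
  induction 1 as [|k _ IH]; [lra|].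
  rewrite fobj_sU_S. pose proof (Rmin_l (f (sU (st k))) (f (slam (st k)))). lra.
Qed.

Lemma div_slam_sq k : C / slam (st k) ^ 2 = C * 25 ^ k.
Proof.
  rewrite slam_state. replace 25 with (5 * 5) by lra.
  rewrite Rpow_mult_distr. field. apply pow_nonzero. lra.
Qed.

Hypothesis eps_pos : 0 < eps.
Hypothesis C_pos : 0 < C.
Hypothesis g_ge_1 : forall x, 0 < x <= 1 -> 1 <= g x.

Lemma inv_eps_sq_pos : 0 < / eps ^ 2.
Proof. apply Rinv_0_lt_compat, pow_lt. exact eps_pos. Qed.

Lemma sL_state k : sL (st k) = sqrt (C / (f (sU (st k)) - / eps ^ 2)).
Proof.
  induction k as [|k IH].
  - unfold sL, sU, fobj; simpl. do 2 f_equal. field. nra.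
  - rewrite solveopt_state_S. unfold solveopt_step.
    destruct Rlt_dec; unfold sL, sU; simpl; [|exact IH].
    do 2 f_equal. unfold fobj; simpl. unfold Rdiv. ring.
Qed.

Lemma div_sq_le_fobj u : 0 < u <= 1 -> C / u ^ 2 + / eps ^ 2 <= f u.
Proof.
  intros Hu. unfold fobj. specialize (g_ge_1 u Hu).
  pose proof inv_eps_sq_pos.
  unfold Rdiv at 2. nra.
Qed.

Lemma C_le_fobj u : 0 < u <= 1 -> C <= f u.
Proof.
  intros Hu. pose proof (div_sq_le_fobj u Hu). pose proof (le_div_sq C u ltac:(lra) Hu).
  pose proof inv_eps_sq_pos. lra.
Qed.

Lemma div_sq_pos u : 0 < u -> 0 < C / u ^ 2.
Proof. intros Hu. apply Rdiv_lt_0_compat; [lra | apply pow_lt; lra]. Qed.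

Lemma slam_lt_sL_iff k : slam (st k) < sL (st k) <-> f (sU (st k)) - / eps ^ 2 < C / slam (st k) ^ 2.
Proof.
  pose proof (sU_state_in_unit k) as HU. rewrite slam_state in *. rewrite sL_state.
  apply lt_sqrt_div_iff; [apply inv_pow5_in_unit | lra |].
  pose proof (div_sq_le_fobj _ HU). pose proof (div_sq_pos _ (proj1 HU)). lra.
Qed.

Lemma sL_state_ge_init k : sL (st O) <= sL (st k).
Proof.
  rewrite !sL_state. apply sqrt_le_1_alt.
  pose proof (sU_state_in_unit k) as Hk. pose proof (sU_state_in_unit O) as H0.
  pose proof (div_sq_le_fobj _ Hk). pose proof (div_sq_pos _ (proj1 Hk)).
  pose proof (fobj_sU_antitone O k (Nat.le_0_l k)).
  unfold Rdiv. apply Rmult_le_compat_l; [lra|]. apply Rinv_le_contravar; lra.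
Qed.

Lemma slam_lt_sL_eventually : exists n, slam (st n) < sL (st n).
Proof.
  assert (HL0 : 0 < sL (st O)).
  { rewrite sL_state. apply sqrt_lt_R0.
    pose proof (sU_state_in_unit O) as HU. pose proof (div_sq_le_fobj _ HU).
    pose proof (div_sq_pos _ (proj1 HU)). apply Rdiv_lt_0_compat; lra. }
  destruct (pow_lt_1_zero (/ 5) ltac:(rewrite Rabs_right; lra) _ HL0) as [n Hn].
  exists n. specialize (Hn n (le_n n)).
  rewrite Rabs_right, pow_inv, <- slam_state in Hn by (left; apply pow_lt; lra).
  pose proof (sL_state_ge_init n). lra.
Qed.

Lemma sL_init_le_slam : sL (st O) <= slam (st O).
Proof.
  apply Rnot_lt_le. rewrite slam_lt_sL_iff.
  pose proof (div_sq_le_fobj 1 ltac:(lra)). unfold sU, slam; simpl in *. lra.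
Qed.

Lemma solveopt_halts : exists N, (0 < N)%nat /\ solveopt_halts_at eps C g N.
Proof.
  destruct (dec_inh_nat_subset_has_unique_least_element (fun n => slam (st n) < sL (st n)))
    as [N [[HN Hleast] _]].
  - intro n. destruct (Rlt_dec (slam (st n)) (sL (st n))); tauto.
  - exact slam_lt_sL_eventually.
  - exists N. split; [|split; [|exact HN]].
    + destruct N; [pose proof sL_init_le_slam; lra | lia].
    + intros k Hk. apply Rnot_lt_ge. intro Hlt. specialize (Hleast k Hlt). lia.
Qed.

Variable lstar : R.
Hypothesis lstar_in_unit : 0 < lstar <= 1.
Hypothesis g_mono : forall x y, 0 <= x -> x <= y -> y <= 1 -> g x <= g y.

Local Notation F := (f lstar).

Lemma fobj_le_25_near_lstar l : 0 < l -> l <= lstar <= 5 * l -> f l <= 25 * F.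
Proof.
  intros Hl Hll. unfold fobj.
  pose proof (div_sq_le_25 C l lstar ltac:(lra) Hl ltac:(lra) ltac:(lra)).
  pose proof (g_mono l lstar ltac:(lra) ltac:(lra) ltac:(lra)).
  pose proof (g_ge_1 lstar lstar_in_unit).
  pose proof inv_eps_sq_pos.
  assert (g l / eps ^ 2 <= g lstar / eps ^ 2) by (apply Rmult_le_compat_r; lra).
  assert (0 <= g lstar / eps ^ 2) by (apply Rmult_le_pos; lra).
  lra.
Qed.

Lemma fobj_sU_or_lstar_le k : f (sU (st k)) <= 25 * F \/ lstar <= 5 * slam (st k).
Proof.
  induction k as [|k [IH|IH]].
  - right. rewrite slam_state. simpl. lra.
  - left. rewrite fobj_sU_S. pose proof (Rmin_l (f (sU (st k))) (f (slam (st k)))). lra.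
  - destruct (Rle_lt_dec lstar (5 * slam (st (S k)))) as [Hle|Hlt]; [right; exact Hle|].
    left. rewrite slam_state in Hlt, IH. simpl in Hlt.
    rewrite fobj_sU_S, slam_state. eapply Rle_trans; [apply Rmin_r|].
    apply fobj_le_25_near_lstar; [apply inv_pow5_in_unit|].
    split; [|lra]. replace (/ (5 * 5 ^ k)) with (/ 5 ^ k / 5) in Hlt by (field; apply pow_nonzero; lra).
    lra.
Qed.

Lemma fobj_sU_or_div_slam_le k : f (sU (st k)) <= 25 * F \/ C / slam (st k) ^ 2 + / eps ^ 2 <= 25 * F.
Proof.
  destruct (fobj_sU_or_lstar_le k) as [H|H]; [left; exact H|right].
  pose proof (div_sq_le_25 C (slam (st k)) lstar ltac:(lra)) as H25.
  rewrite slam_state in *. specialize (H25 (proj1 (inv_pow5_in_unit k)) ltac:(lra) H).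
  pose proof (div_sq_le_fobj lstar lstar_in_unit).
  pose proof inv_eps_sq_pos. lra.
Qed.

Lemma fobj_sU_exit_le k : slam (st k) < sL (st k) -> f (sU (st k)) <= 25 * F.
Proof.
  rewrite slam_lt_sL_iff. intro H. destruct (fobj_sU_or_div_slam_le k); lra.
Qed.

Lemma div_slam_sq_guard_le k : sL (st k) <= slam (st k) -> C / slam (st k) ^ 2 <= 25 * F.
Proof.
  intro H. assert (Hguard : ~ (f (sU (st k)) - / eps ^ 2 < C / slam (st k) ^ 2))
    by (rewrite <- slam_lt_sL_iff; lra).
  pose proof inv_eps_sq_pos.
  destruct (fobj_sU_or_div_slam_le k); lra.
Qed.

Lemma solveopt_samples_le (cost : R -> R) (a : R) (N : nat) :
  0 <= a -> (forall l, 0 < l <= 1 -> cost l <= a * C / l ^ 2) ->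
  (0 < N)%nat -> solveopt_halts_at eps C g N ->
  solveopt_samples eps C g cost N <= 28 * a * F.
Proof.
  intros Ha Hcost HN [Hguard _]. destruct N as [|M]; [lia|].
  assert (Hsum : sum_upto (fun k => cost (slam (st k))) (S M) <= a * C * ((25 ^ S M - 1) / 24)).
  { replace ((25 ^ S M - 1) / 24) with (sum_upto (fun k => 25 ^ k) (S M))
      by (rewrite <- sum_upto_geom; field).
    rewrite <- sum_upto_scal. apply sum_upto_le. intros k _.
    replace (a * C * 25 ^ k) with (a * (C / slam (st k) ^ 2)) by (rewrite div_slam_sq; ring).
    unfold Rdiv. rewrite <- Rmult_assoc. apply Hcost.
    rewrite slam_state. apply inv_pow5_in_unit. }
  assert (Hlast : C * 25 ^ M <= 25 * F).
  { rewrite <- div_slam_sq. apply div_slam_sq_guard_le, Rge_le, Hguard. lia. }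
  pose proof (C_le_fobj lstar lstar_in_unit) as HCF.
  pose proof (Hcost 1 ltac:(lra)) as H1.
  (* cost 1 + Σ_{k ≤ M} ≤ a C + (25/24) a C 25^M ≤ (1 + 625/24) a F ≤ 28 a F *)
  unfold solveopt_samples. simpl pow in *. replace (a * C / (1 * 1)) with (a * C) in H1 by field.
  nra.
Qed.

End SolveOpt.

Theorem theoremB3 :
  forall c : R, 0 < c ->
  exists c' : R, 0 < c' /\
  forall (eps K C delta : R) (g : R -> R) (lstar : R) (cost : R -> R),
    0 < eps < 1 -> 3 <= K -> K < C -> 0 < delta < 1 ->
    (forall x, 0 <= x <= 1 -> 1 <= g x <= K) ->
    (forall x y, 0 <= x -> x <= y -> y <= 1 -> g x <= g y) ->
    0 < lstar <= 1 ->
    (forall l, 0 < l <= 1 -> fobj eps C g lstar <= fobj eps C g l) ->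
    (forall l, 0 < l <= 1 -> cost l <= c * C * ln (K / delta) / l ^ 2) ->
    exists N : nat,
      solveopt_halts_at eps C g N /\
      fobj eps C g (sU (solveopt_state eps C g N)) <= 50 * fobj eps C g lstar /\
      solveopt_samples eps C g cost N
        <= c' * fobj eps C g lstar * ln (K / delta) * (1 + ln (1 / eps)).
Proof.
  intros c Hc. exists (28 * c). split; [lra|].
  intros eps K C delta g lstar cost Heps HK HKC Hdelta Hg Hmono Hls _ Hcost.
  assert (Hg1 : forall x, 0 < x <= 1 -> 1 <= g x) by (intros x Hx; apply Hg; lra).
  assert (HC : 0 < C) by lra.
  assert (Hln : 0 < ln (K / delta)).
  { rewrite <- ln_1. apply ln_increasing; [lra|]. apply lt_div_iff; lra. }
  assert (Hln_eps : 0 <= ln (1 / eps)).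
  { rewrite <- ln_1. left. apply ln_increasing; [lra|]. apply lt_div_iff; lra. }
  pose proof (C_le_fobj eps C g ltac:(lra) HC Hg1 lstar Hls) as HF.
  destruct (solveopt_halts eps C g ltac:(lra) HC Hg1) as [N [HN Hhalt]].
  exists N. split; [exact Hhalt|]. split.
  - pose proof (fobj_sU_exit_le eps C g ltac:(lra) HC Hg1 lstar Hls Hmono N (proj2 Hhalt)). lra.
  - eapply Rle_trans.
    + apply (solveopt_samples_le eps C g ltac:(lra) HC Hg1 lstar Hls Hmono cost (c * ln (K / delta)) N);
        [nra | | exact HN | exact Hhalt].
      intros l Hl. replace (c * ln (K / delta) * C / l ^ 2) with (c * C * ln (K / delta) / l ^ 2)
        by (unfold Rdiv; ring). auto.
    + assert (0 <= c * fobj eps C g lstar * ln (K / delta) * ln (1 / eps))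
        by (repeat apply Rmult_le_pos; lra).
      lra.
Qed.
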